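(* Let $\alpha,\beta,d>0$ and $f$ as in the context. The only nonnegative, bounded stationary solutions $(v_j,\rho_j)_{j\in\mathbb{Z}}$ of the system described in the context are $(v_j,\rho_j)\equiv(0,0)$ for all $j$ and $(v_j,\rho_j)\equiv(\beta/\alpha,1)$ for all $j$ (i.e. $v_j(x)=\beta/\alpha$ for all $x\in[0,1]$ and $\rho_j=1$).
   Context: $f\in\mathscr{C}^1([0,1])$ satisfies $f(0)=f(1)=0$ and $0<f(u)\le f'(0)u$ for $u\in(0,1)$, extended to a locally Lipschitz function on $\mathbb{R}$ negative on $\mathbb{R}\setminus[0,1]$. A stationary solution is a family $(v_j,\rho_j)_{j\in\mathbb{Z}}$ with $v_j\in\mathscr{C}^2([0,1])$ and $\rho_j\in\mathbb{R}$ such that for all $j\in\mathbb{Z}$: $d\,v_j''(x)=0$ for $x\in(0,1)$; $0=f(\rho_j)+\alpha(v_j(0)+v_{j-1}(1))-2\beta\rho_j$; $-d\,v_j'(0)+\alpha v_j(0)=\beta\rho_j$; $d\,v_j'(1)+\alpha v_j(1)=\beta\rho_{j+1}$. Nonnegative and bounded means $v_j\ge0$, $\rho_j\ge0$ and $\sup_{j,x}|v_j(x)|+\sup_j|\rho_j|<\infty$. *)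

From Stdlib Require Import Reals ZArith.
Open Scope R_scope.

Definition deriv_on01 (g g' : R -> R) : Prop :=
  forall x, 0 <= x <= 1 ->
  forall eps, 0 < eps -> exists delta, 0 < delta /\
    forall y, 0 <= y <= 1 -> y <> x -> Rabs (y - x) < delta ->
      Rabs ((g y - g x) / (y - x) - g' x) < eps.

Definition cont_on01 (g : R -> R) : Prop :=
  forall x, 0 <= x <= 1 ->
  forall eps, 0 < eps -> exists delta, 0 < delta /\
    forall y, 0 <= y <= 1 -> Rabs (y - x) < delta -> Rabs (g y - g x) < eps.

Definition C1_on01 (g g' : R -> R) : Prop := deriv_on01 g g' /\ cont_on01 g'.

Definition C2_on01 (g g' g'' : R -> R) : Prop :=
  deriv_on01 g g' /\ deriv_on01 g' g'' /\ cont_on01 g''.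

Definition locally_lipschitz (f : R -> R) : Prop :=
  forall a b, exists L, forall x y, a <= x <= b -> a <= y <= b ->
    Rabs (f x - f y) <= L * Rabs (x - y).

Definition admissible_f (f f' : R -> R) : Prop :=
  C1_on01 f f' /\ f 0 = 0 /\ f 1 = 0 /\
  (forall u, 0 < u < 1 -> 0 < f u /\ f u <= f' 0 * u) /\
  locally_lipschitz f /\
  (forall u, (u < 0 \/ 1 < u) -> f u < 0).

Definition stationary_solution (f : R -> R) (alpha beta d : R)
  (v v' v'' : Z -> R -> R) (rho : Z -> R) : Prop :=
  forall j : Z,
    C2_on01 (v j) (v' j) (v'' j) /\
    (forall x, 0 < x < 1 -> d * v'' j x = 0) /\
    0 = f (rho j) + alpha * (v j 0 + v (j - 1)%Z 1) - 2 * beta * rho j /\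
    - d * v' j 0 + alpha * v j 0 = beta * rho j /\
    d * v' j 1 + alpha * v j 1 = beta * rho (j + 1)%Z.

Definition nonneg_bounded (v : Z -> R -> R) (rho : Z -> R) : Prop :=
  (forall j x, 0 <= x <= 1 -> 0 <= v j x) /\ (forall j, 0 <= rho j) /\
  exists M, forall j x, 0 <= x <= 1 -> Rabs (v j x) <= M /\ Rabs (rho j) <= M.

From Stdlib Require Import Reals ZArith Lra Lia.
Open Scope R_scope.

(* Each v_j is affine, so its two Robin conditions determine v_j(0) and v_j(1)
   linearly from rho_j and rho_(j+1); the exchange condition then becomes the
   discrete equation f(rho_j) = -k (rho_(j+1) + rho_(j-1) - 2 rho_j) with
   k = beta d / (alpha + 2 d) > 0.  Where rho_j > 1, f(rho_j) < 0 makes rho strictly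
   convex, so rho rises on one side of j and then keeps rising at least linearly,
   contradicting boundedness.  Hence 0 <= rho <= 1, so f(rho_j) >= 0 and rho is
   concave; a concave sequence on Z that is bounded below is constant, and
   f(rho) = 0 leaves rho = 0 or rho = 1, whence v_j = beta rho / alpha. *)

Lemma deriv_on01_interior (g g' : R -> R) (x : R) :
  deriv_on01 g g' -> 0 < x < 1 -> derivable_pt_lim g x (g' x).
Proof.
  intros Hd hx eps heps.
  destruct (Hd x ltac:(lra) eps heps) as [del [hdel Hdel]].
  assert (hpos : 0 < Rmin del (Rmin x (1 - x))).
  { apply Rmin_glb_lt; [lra | apply Rmin_glb_lt; lra]. }
  exists (mkposreal _ hpos); simpl; intros h hh0 hh.
  pose proof (Rmin_l del (Rmin x (1 - x))); pose proof (Rmin_r del (Rmin x (1 - x))).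
  pose proof (Rmin_l x (1 - x)); pose proof (Rmin_r x (1 - x)).
  apply Rabs_def2 in hh as [hlo hhi].
  specialize (Hdel (x + h)); replace (x + h - x) with h in Hdel by ring.
  apply Hdel; [lra | intro; apply hh0; lra | apply Rabs_def1; lra].
Qed.

Lemma cont_on01_of_lipschitz_at (g : R -> R) :
  (forall p, 0 <= p <= 1 -> exists K del, 0 < del /\
     forall y, 0 <= y <= 1 -> Rabs (y - p) < del -> Rabs (g y - g p) <= K * Rabs (y - p)) ->
  cont_on01 g.
Proof.
  intros Hlip p hp eps heps.
  destruct (Hlip p hp) as [K [del [hdel Hdel]]].
  set (K' := Rabs K + 1).
  assert (hK' : 0 < K') by (unfold K'; pose proof (Rabs_pos K); lra).
  exists (Rmin del (eps / K')); split.
  { apply Rmin_glb_lt; [lra | apply Rdiv_lt_0_compat; lra]. }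
  intros y hy hyp.
  pose proof (Rmin_l del (eps / K')); pose proof (Rmin_r del (eps / K')).
  assert (hsmall : K' * Rabs (y - p) < eps).
  { replace eps with (K' * (eps / K')) by (field; lra).
    apply Rmult_lt_compat_l; lra. }
  specialize (Hdel y hy ltac:(lra)).
  assert (K * Rabs (y - p) <= K' * Rabs (y - p)).
  { apply Rmult_le_compat_r; [apply Rabs_pos | unfold K'; pose proof (Rle_abs K); lra]. }
  lra.
Qed.

Lemma deriv_on01_cont (g g' : R -> R) : deriv_on01 g g' -> cont_on01 g.
Proof.
  intros Hd; apply cont_on01_of_lipschitz_at; intros p hp.
  destruct (Hd p hp 1 Rlt_0_1) as [del [hdel Hdel]].
  exists (Rabs (g' p) + 1), del; split; [exact hdel|].
  intros y hy hyp.
  destruct (Req_dec y p) as [Hyp | hne].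
  { subst y; unfold Rminus; rewrite !Rplus_opp_r, Rabs_R0; lra. }
  specialize (Hdel y hy hne hyp).
  pose proof (Rabs_triang_inv ((g y - g p) / (y - p)) (g' p)).
  replace (g y - g p) with ((g y - g p) / (y - p) * (y - p)) by (field; lra).
  rewrite Rabs_mult; apply Rmult_le_compat_r; [apply Rabs_pos | lra].
Qed.

Lemma cont_on01_affine (a c : R) : cont_on01 (fun x => a + c * x).
Proof.
  apply cont_on01_of_lipschitz_at; intros p _.
  exists (Rabs c), 1; split; [lra|].
  intros y _ _; replace (a + c * y - (a + c * p)) with (c * (y - p)) by ring.
  rewrite Rabs_mult; lra.
Qed.

Lemma interior01_approx (p del : R) :
  0 <= p <= 1 -> 0 < del -> exists y, 0 < y < 1 /\ Rabs (y - p) < del.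
Proof.
  intros hp hdel.
  set (t := Rmin 1 del).
  assert (ht : 0 < t <= 1) by (unfold t; split; [apply Rmin_glb_lt | apply Rmin_l]; lra).
  assert (htdel : t <= del) by apply Rmin_r.
  exists (p + t * (1 / 2 - p)); split.
  - assert (0 <= p * (1 - t) <= 1 - t) by nra. nra.
  - replace (p + t * (1 / 2 - p) - p) with (t * (1 / 2 - p)) by ring.
    rewrite Rabs_mult, Rabs_pos_eq by lra.
    assert (Rabs (1 / 2 - p) <= 1 / 2) by (apply Rabs_le; lra). nra.
Qed.

Lemma cont_on01_ext_interior (g h : R -> R) :
  cont_on01 g -> cont_on01 h -> (forall x, 0 < x < 1 -> g x = h x) ->
  forall x, 0 <= x <= 1 -> g x = h x.
Proof.
  intros Hg Hh Heq p hp.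
  destruct (Req_dec (g p) (h p)) as [Hgh | hne]; [exact Hgh | exfalso].
  set (e := Rabs (g p - h p)).
  assert (he : 0 < e) by (apply Rabs_pos_lt; lra).
  destruct (Hg p hp (e / 2) ltac:(lra)) as [dg [hdg Hdg]].
  destruct (Hh p hp (e / 2) ltac:(lra)) as [dh [hdh Hdh]].
  destruct (interior01_approx p (Rmin dg dh) hp ltac:(apply Rmin_glb_lt; lra))
    as [y [hy hyp]].
  pose proof (Rmin_l dg dh); pose proof (Rmin_r dg dh).
  specialize (Hdg y ltac:(lra) ltac:(lra)); specialize (Hdh y ltac:(lra) ltac:(lra)).
  rewrite (Heq y hy), Rabs_minus_sym in Hdg.
  assert (e <= Rabs (g p - h y) + Rabs (h y - h p)).
  { unfold e; replace (g p - h p) with ((g p - h y) + (h y - h p)) by ring.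
    apply Rabs_triang. }
  lra.
Qed.

Lemma deriv_on01_const_affine (g g' : R -> R) (c : R) :
  deriv_on01 g g' -> (forall x, 0 < x < 1 -> g' x = c) ->
  forall x, 0 <= x <= 1 -> g x = g 0 + c * x.
Proof.
  intros Hd Hc.
  (* The mean value theorem needs two-sided derivatives, which deriv_on01 only
     provides inside (0,1); the endpoints are recovered by continuity. *)
  assert (Hmvt : forall a b, 0 < a < b -> b < 1 -> g b - g a = c * (b - a)).
  { intros a b hab hb.
    destruct (MVT_cor2 g g' a b ltac:(lra)) as [z [Hz hz]].
    - intros z hz; apply deriv_on01_interior; [exact Hd | lra].
    - rewrite Hz, Hc by lra; ring. }
  assert (Hline : forall x, 0 <= x <= 1 -> g x = (g (1 / 2) - c / 2) + c * x).
  { apply cont_on01_ext_interior;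
      [exact (deriv_on01_cont g g' Hd) | apply cont_on01_affine |].
    intros x hx; destruct (Rtotal_order x (1 / 2)) as [hlt | [heq | hgt]].
    - pose proof (Hmvt x (1 / 2) ltac:(lra) ltac:(lra)); lra.
    - subst x; field.
    - pose proof (Hmvt (1 / 2) x ltac:(lra) ltac:(lra)); lra. }
  intros x hx; rewrite (Hline x hx), (Hline 0) by lra; ring.
Qed.

Lemma zero_second_deriv_affine (g g' g'' : R -> R) :
  C2_on01 g g' g'' -> (forall x, 0 < x < 1 -> g'' x = 0) ->
  (forall x, 0 <= x <= 1 -> g x = g 0 + (g 1 - g 0) * x) /\
  g' 0 = g 1 - g 0 /\ g' 1 = g 1 - g 0.
Proof.
  intros [Hg [Hg' _]] H0.
  assert (Hslope : forall x, 0 <= x <= 1 -> g' x = g' 0).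
  { intros x hx; rewrite (deriv_on01_const_affine g' g'' 0 Hg' H0 x hx); ring. }
  assert (Hline : forall x, 0 <= x <= 1 -> g x = g 0 + g' 0 * x).
  { apply (deriv_on01_const_affine g g' _ Hg); intros x hx; apply Hslope; lra. }
  assert (H1 : g' 0 = g 1 - g 0) by (rewrite (Hline 1) by lra; ring).
  split; [|split].
  - intros x hx; rewrite (Hline x hx), H1; reflexivity.
  - exact H1.
  - rewrite (Hslope 1) by lra; exact H1.
Qed.

Lemma robin_affine_endpoints (alpha beta d r0 r1 a b : R) :
  0 < alpha -> 0 < d ->
  - d * (b - a) + alpha * a = beta * r0 ->
  d * (b - a) + alpha * b = beta * r1 ->
  a = beta * ((alpha + d) * r0 + d * r1) / (alpha * (alpha + 2 * d)) /\
  b = beta * (d * r0 + (alpha + d) * r1) / (alpha * (alpha + 2 * d)).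
Proof.
  intros ha hd E0 E1.
  assert (hdet : alpha * (alpha + 2 * d) <> 0) by (apply Rgt_not_eq; nra).
  assert (Ka : alpha * (alpha + 2 * d) * a
     = (alpha + d) * (- d * (b - a) + alpha * a) + d * (d * (b - a) + alpha * b)) by ring.
  assert (Kb : alpha * (alpha + 2 * d) * b
     = d * (- d * (b - a) + alpha * a) + (alpha + d) * (d * (b - a) + alpha * b)) by ring.
  rewrite E0, E1 in Ka, Kb.
  split; apply (Rmult_eq_reg_l (alpha * (alpha + 2 * d))); try exact hdet.
  - rewrite Ka; field; split; apply Rgt_not_eq; lra.
  - rewrite Kb; field; split; apply Rgt_not_eq; lra.
Qed.

Definition second_diff (r : Z -> R) (i : Z) : R := r (i + 1)%Z + r (i - 1)%Z - 2 * r i.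

Definition Zreflect (r : Z -> R) (i : Z) : R := r (- i)%Z.

Lemma second_diff_Zreflect (r : Z -> R) (i : Z) :
  second_diff (Zreflect r) i = second_diff r (- i).
Proof.
  unfold second_diff, Zreflect.
  replace (- (i + 1))%Z with (- i - 1)%Z by lia.
  replace (- (i - 1))%Z with (- i + 1)%Z by lia.
  ring.
Qed.

Lemma linear_growth_unbounded (r : Z -> R) (j : Z) (D M : R) : 0 < D ->
  (forall n : nat, D <= r (j + Z.of_nat n + 1)%Z - r (j + Z.of_nat n)%Z) ->
  exists i, M < r i.
Proof.
  intros hD Hstep.
  assert (Hlin : forall n : nat, r j + INR n * D <= r (j + Z.of_nat n)%Z).
  { induction n as [|n IH].
    - rewrite Z.add_0_r; simpl; lra.
    - rewrite S_INR, Nat2Z.inj_succ, Z.add_succ_r, <- Z.add_1_r.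
      specialize (Hstep n); lra. }
  destruct (INR_unbounded ((M - r j) / D)) as [n hn].
  exists (j + Z.of_nat n)%Z.
  assert (Hn : (M - r j) / D * D < INR n * D) by (apply Rmult_lt_compat_r; lra).
  replace ((M - r j) / D * D) with (M - r j) in Hn by (field; lra).
  specialize (Hlin n); lra.
Qed.

Lemma concave_bounded_below_nondecreasing (r : Z -> R) (m : R) :
  (forall i, second_diff r i <= 0) -> (forall i, m <= r i) ->
  forall j, r j <= r (j + 1)%Z.
Proof.
  intros Hcv Hm j; apply Rnot_lt_le; intro hdesc.
  set (D := r j - r (j + 1)%Z).
  assert (Hstep : forall n : nat,
    D <= - r (j + Z.of_nat n + 1)%Z - - r (j + Z.of_nat n)%Z).
  { induction n as [|n IH].
    - rewrite Z.add_0_r; unfold D; lra.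
    - rewrite Nat2Z.inj_succ, Z.add_succ_r, <- Z.add_1_r.
      pose proof (Hcv (j + Z.of_nat n + 1)%Z) as Hn; unfold second_diff in Hn.
      replace (j + Z.of_nat n + 1 - 1)%Z with (j + Z.of_nat n)%Z in Hn by lia.
      lra. }
  destruct (linear_growth_unbounded (fun i => - r i) j D (- m)
              ltac:(unfold D; lra) Hstep) as [i hi].
  specialize (Hm i); lra.
Qed.

Lemma concave_bounded_below_const (r : Z -> R) (m : R) :
  (forall i, second_diff r i <= 0) -> (forall i, m <= r i) ->
  forall i, r i = r 0%Z.
Proof.
  intros Hcv Hm.
  assert (Hcv' : forall i, second_diff (Zreflect r) i <= 0).
  { intros i; rewrite second_diff_Zreflect; apply Hcv. }
  assert (Hstep : forall j, r (j + 1)%Z = r j).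
  { intros j; apply Rle_antisym.
    - pose proof (concave_bounded_below_nondecreasing (Zreflect r) m Hcv'
                    (fun i => Hm (- i)%Z) (- (j + 1))%Z) as Hj.
      unfold Zreflect in Hj.
      replace (- (- (j + 1) + 1))%Z with j in Hj by lia.
      replace (- - (j + 1))%Z with (j + 1)%Z in Hj by lia.
      exact Hj.
    - apply (concave_bounded_below_nondecreasing r m Hcv Hm). }
  apply Z.peano_ind; [reflexivity | |].
  - intros i Hi; rewrite <- Z.add_1_r, Hstep; exact Hi.
  - intros i Hi; rewrite <- Hi, <- (Hstep (Z.pred i)), Z.add_1_r, Z.succ_pred.
    reflexivity.
Qed.

Lemma convex_above_one_no_ascent (r : Z -> R) (M : R) :
  (forall i, 1 < r i -> 0 < second_diff r i) -> (forall i, r i <= M) ->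
  forall j, 1 < r j -> r (j + 1)%Z <= r j.
Proof.
  intros Hcv HM j h1; apply Rnot_lt_le; intro hasc.
  set (D := r (j + 1)%Z - r j).
  assert (hD : 0 < D) by (unfold D; lra).
  assert (Hstep : forall n : nat, 1 < r (j + Z.of_nat n)%Z /\
    D <= r (j + Z.of_nat n + 1)%Z - r (j + Z.of_nat n)%Z).
  { induction n as [|n [IH1 IH2]].
    - rewrite Z.add_0_r; unfold D; lra.
    - rewrite Nat2Z.inj_succ, Z.add_succ_r, <- Z.add_1_r.
      assert (hgt : 1 < r (j + Z.of_nat n + 1)%Z) by lra.
      split; [exact hgt|].
      pose proof (Hcv _ hgt) as Hn; unfold second_diff in Hn.
      replace (j + Z.of_nat n + 1 - 1)%Z with (j + Z.of_nat n)%Z in Hn by lia.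
      lra. }
  destruct (linear_growth_unbounded r j D M hD (fun n => proj2 (Hstep n))) as [i hi].
  specialize (HM i); lra.
Qed.

Lemma convex_above_one_bounded_le1 (r : Z -> R) (M : R) :
  (forall i, 1 < r i -> 0 < second_diff r i) -> (forall i, r i <= M) ->
  forall i, r i <= 1.
Proof.
  intros Hcv HM i; apply Rnot_lt_le; intro h1.
  assert (Hcv' : forall k, 1 < Zreflect r k -> 0 < second_diff (Zreflect r) k).
  { intros k hk; rewrite second_diff_Zreflect; apply Hcv, hk. }
  pose proof (convex_above_one_no_ascent r M Hcv HM i h1) as Hright.
  pose proof (convex_above_one_no_ascent (Zreflect r) M Hcv' (fun k => HM (- k)%Z)
                (- i)%Z) as Hleft.
  unfold Zreflect in Hleft; rewrite Z.opp_involutive in Hleft.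
  replace (- (- i + 1))%Z with (i - 1)%Z in Hleft by lia.
  specialize (Hleft h1); specialize (Hcv i h1); unfold second_diff in Hcv.
  lra.
Qed.

Lemma bounded_nonneg_discrete_kpp_const (f : R -> R) (k M : R) (r : Z -> R) :
  0 < k -> f 0 = 0 -> f 1 = 0 ->
  (forall u, 0 < u < 1 -> 0 < f u) -> (forall u, u < 0 \/ 1 < u -> f u < 0) ->
  (forall i, f (r i) = - k * second_diff r i) ->
  (forall i, 0 <= r i <= M) ->
  (forall i, r i = 0) \/ (forall i, r i = 1).
Proof.
  intros hk f0 f1 fpos fneg Heq Hb.
  assert (Hle1 : forall i, r i <= 1).
  { apply (convex_above_one_bounded_le1 r M); [|intro i; apply Hb].
    intros i hi; pose proof (fneg _ (or_intror hi)) as Hf; rewrite Heq in Hf; nra. }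
  assert (Hf_nonneg : forall i, 0 <= f (r i)).
  { intros i.
    destruct (Rle_lt_or_eq_dec 0 (r i) (proj1 (Hb i))) as [h0 | h0].
    - destruct (Rle_lt_or_eq_dec (r i) 1 (Hle1 i)) as [h1 | h1].
      + apply Rlt_le, fpos; lra.
      + rewrite h1, f1; lra.
    - rewrite <- h0, f0; lra. }
  assert (Hcc : forall i, second_diff r i <= 0).
  { intros i; pose proof (Hf_nonneg i) as Hf; rewrite Heq in Hf; nra. }
  pose proof (concave_bounded_below_const r 0 Hcc (fun i => proj1 (Hb i))) as Hconst.
  assert (Hf0 : f (r 0%Z) = 0).
  { rewrite Heq; unfold second_diff; rewrite (Hconst (0 + 1)%Z), (Hconst (0 - 1)%Z); ring. }
  destruct (Rle_lt_or_eq_dec 0 (r 0%Z) (proj1 (Hb 0%Z))) as [h0 | h0].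
  - destruct (Rle_lt_or_eq_dec (r 0%Z) 1 (Hle1 0%Z)) as [h1 | h1].
    + pose proof (fpos _ (conj h0 h1)); lra.
    + right; intros i; rewrite Hconst; exact h1.
  - left; intros i; rewrite Hconst; symmetry; exact h0.
Qed.

Section StationarySolution.

Variables (f : R -> R) (alpha beta d : R) (v v' v'' : Z -> R -> R) (rho : Z -> R).
Hypotheses (halpha : 0 < alpha) (hd : 0 < d).
Hypothesis Hsol : stationary_solution f alpha beta d v v' v'' rho.

Lemma stationary_v_affine (j : Z) :
  (forall x, 0 <= x <= 1 -> v j x = v j 0 + (v j 1 - v j 0) * x) /\
  v' j 0 = v j 1 - v j 0 /\ v' j 1 = v j 1 - v j 0.
Proof.
  destruct (Hsol j) as [HC2 [Hharm _]].
  apply (zero_second_deriv_affine _ _ _ HC2).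
  intros x hx; specialize (Hharm x hx).
  apply Rmult_integral in Hharm as [Hd0 | Hv]; [lra | exact Hv].
Qed.

Lemma stationary_v_endpoints (j : Z) :
  v j 0 = beta * ((alpha + d) * rho j + d * rho (j + 1)%Z) / (alpha * (alpha + 2 * d)) /\
  v j 1 = beta * (d * rho j + (alpha + d) * rho (j + 1)%Z) / (alpha * (alpha + 2 * d)).
Proof.
  destruct (Hsol j) as [_ [_ [_ [Hleft Hright]]]].
  destruct (stationary_v_affine j) as [_ [Hs0 Hs1]].
  rewrite Hs0 in Hleft; rewrite Hs1 in Hright.
  exact (robin_affine_endpoints _ _ _ _ _ _ _ halpha hd Hleft Hright).
Qed.

Lemma stationary_rho_equation (i : Z) :
  f (rho i) = - (beta * d / (alpha + 2 * d)) * second_diff rho i.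
Proof.
  destruct (Hsol i) as [_ [_ [Hexch _]]].
  destruct (stationary_v_endpoints i) as [Hv0 _].
  destruct (stationary_v_endpoints (i - 1)%Z) as [_ Hv1].
  replace (i - 1 + 1)%Z with i in Hv1 by lia.
  replace (f (rho i)) with (2 * beta * rho i - alpha * (v i 0 + v (i - 1)%Z 1)) by lra.
  rewrite Hv0, Hv1; unfold second_diff.
  field; split; apply Rgt_not_eq; lra.
Qed.

Lemma stationary_v_of_const_rho (c : R) : (forall i, rho i = c) ->
  forall j x, 0 <= x <= 1 -> v j x = beta * c / alpha.
Proof.
  intros Hc j x hx.
  destruct (stationary_v_affine j) as [Hline _].
  destruct (stationary_v_endpoints j) as [Hv0 Hv1].
  rewrite (Hline x hx), Hv0, Hv1, !Hc.
  field; split; apply Rgt_not_eq; lra.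
Qed.

End StationarySolution.

Theorem theorem3p1 (alpha beta d : R) (f f' : R -> R)
  (v v' v'' : Z -> R -> R) (rho : Z -> R) :
  0 < alpha -> 0 < beta -> 0 < d ->
  admissible_f f f' ->
  stationary_solution f alpha beta d v v' v'' rho ->
  nonneg_bounded v rho ->
  (forall j : Z, (forall x, 0 <= x <= 1 -> v j x = 0) /\ rho j = 0) \/
  (forall j : Z, (forall x, 0 <= x <= 1 -> v j x = beta / alpha) /\ rho j = 1).
Proof.
  intros halpha hbeta hd [_ [f0 [f1 [fpos [_ fneg]]]]] Hsol [_ [Hrho [M HM]]].
  assert (hk : 0 < beta * d / (alpha + 2 * d)) by (apply Rdiv_lt_0_compat; nra).
  assert (Hb : forall i, 0 <= rho i <= M).
  { intros i; split; [apply Hrho|].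
    destruct (HM i 0 ltac:(lra)) as [_ Hi]; pose proof (Rle_abs (rho i)); lra. }
  destruct (bounded_nonneg_discrete_kpp_const f _ M rho hk f0 f1
              (fun u hu => proj1 (fpos u hu)) fneg
              (stationary_rho_equation f alpha beta d v v' v'' rho halpha hd Hsol) Hb)
    as [Hzero | Hone].
  - left; intros j; split; [intros x hx | apply Hzero].
    rewrite (stationary_v_of_const_rho f alpha beta d v v' v'' rho halpha hd Hsol 0 Hzero j x hx).
    field; lra.
  - right; intros j; split; [intros x hx | apply Hone].
    rewrite (stationary_v_of_const_rho f alpha beta d v v' v'' rho halpha hd Hsol 1 Hone j x hx).
    field; lra.
Qed.
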